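(* Let $(A,\circ,[\cdot,\cdot])$ be a dual pre-Poisson algebra. (a) Let $T:V\to A$ be an $\mathcal{O}$-operator on $(A,\circ,[\cdot,\cdot])$ associated to a representation $(V;l_\circ,r_\circ,l_{[\cdot,\cdot]},r_{[\cdot,\cdot]})$. Define on $V$: $u\rhd_V v=l_\circ(T(u))v$, $u\lhd_V v=r_\circ(T(v))u$, $u\succ_V v=l_{[\cdot,\cdot]}(T(u))v$, $u\prec_V v=r_{[\cdot,\cdot]}(T(v))u$. Then $(V,\rhd_V,\lhd_V,\succ_V,\prec_V)$ is a pre-dual pre-Poisson algebra, and $T$ is a homomorphism of dual pre-Poisson algebras from $(V,\circ_V,[\cdot,\cdot]_V)$, where $u\circ_V v=u\rhd_V v+u\lhd_V v$ and $[u,v]_V=u\succ_V v+u\prec_V v$, to $(A,\circ,[\cdot,\cdot])$. (b) Let $P:A\to A$ be a Rota–Baxter operator on $(A,\circ,[\cdot,\cdot])$ and define $x\rhd y=P(x)\circ y$, $x\lhd y=x\circ P(y)$, $x\succ y=[P(x),y]$, $x\prec y=[x,P(y)]$. Then $(A,\rhd,\lhd,\succ,\prec)$ is a pre-dual pre-Poisson algebra, and $P$ is a homomorphism of dual pre-Poisson algebras from $(A,\circ',[\cdot,\cdot]')$, where $x\circ' y=x\rhd y+x\lhd y$ and $[x,y]'=x\succ y+x\prec y$, to $(A,\circ,[\cdot,\cdot])$.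
   Context: Field $\mathbb{F}$ of characteristic $0$. Dual pre-Poisson algebra: $x\circ(y\circ z)=(x\circ y)\circ z=(y\circ x)\circ z$; $[x,[y,z]]=[[x,y],z]+[y,[x,z]]$; $[x,y\circ z]=[x,y]\circ z+y\circ[x,z]$; $[x\circ y,z]=x\circ[y,z]+y\circ[x,z]$; $[x,y]\circ z=-[y,x]\circ z$. A homomorphism $f$ preserves both operations. A representation $(V;l_\circ,r_\circ,l_{[\cdot,\cdot]},r_{[\cdot,\cdot]})$: linear maps $A\to\mathrm{End}(V)$ with, for all $x,y$: $r_\circ(x)r_\circ(y)=r_\circ(y\circ x)=l_\circ(y)r_\circ(x)=r_\circ(x)l_\circ(y)$; $l_\circ(x\circ y)=l_\circ(x)l_\circ(y)=l_\circ(y)l_\circ(x)$; $l_{[\cdot,\cdot]}([x,y])=l_{[\cdot,\cdot]}(x)l_{[\cdot,\cdot]}(y)-l_{[\cdot,\cdot]}(y)l_{[\cdot,\cdot]}(x)$; $r_{[\cdot,\cdot]}([x,y])=r_{[\cdot,\cdot]}(y)r_{[\cdot,\cdot]}(x)+l_{[\cdot,\cdot]}(x)r_{[\cdot,\cdot]}(y)$; $r_{[\cdot,\cdot]}(x)r_{[\cdot,\cdot]}(y)=-r_{[\cdot,\cdot]}(x)l_{[\cdot,\cdot]}(y)$; $r_{[\cdot,\cdot]}(x\circ y)=r_\circ(y)r_{[\cdot,\cdot]}(x)+l_\circ(x)r_{[\cdot,\cdot]}(y)$; $l_{[\cdot,\cdot]}(x)r_\circ(y)=r_\circ(y)l_{[\cdot,\cdot]}(x)+r_\circ([x,y])$;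 $l_{[\cdot,\cdot]}(x)l_\circ(y)=l_\circ([x,y])+l_\circ(y)l_{[\cdot,\cdot]}(x)$; $r_{[\cdot,\cdot]}(x)r_\circ(y)=r_\circ([y,x])+l_\circ(y)r_{[\cdot,\cdot]}(x)$; $l_{[\cdot,\cdot]}(x\circ y)=l_\circ(x)l_{[\cdot,\cdot]}(y)+l_\circ(y)l_{[\cdot,\cdot]}(x)$; $r_{[\cdot,\cdot]}(x)(l_\circ-r_\circ)(y)=0$; $r_\circ(x)(l_{[\cdot,\cdot]}+r_{[\cdot,\cdot]})(y)=0$; $l_\circ([x,y]+[y,x])=0$. An $\mathcal{O}$-operator: linear $T:V\to A$ with $T(u)\circ T(v)=T(l_\circ(T(u))v+r_\circ(T(v))u)$ and $[T(u),T(v)]=T(l_{[\cdot,\cdot]}(T(u))v+r_{[\cdot,\cdot]}(T(v))u)$. A Rota–Baxter operator: linear $P:A\to A$ with $P(x)\circ P(y)=P(P(x)\circ y+x\circ P(y))$ and $[P(x),P(y)]=P([P(x),y]+[x,P(y)])$. A pre-dual pre-Poisson algebra: bilinear $\rhd,\lhd,\succ,\prec$ with, for all $x,y,z$: $x\lhd(y\lhd z+y\rhd z)=(x\lhd y)\lhd z=(y\rhd x)\lhd z=y\rhd(x\lhd z)$; $x\rhd(y\rhd z)=(x\lhd y+x\rhd y)\rhd z=(y\lhd x+y\rhd x)\rhd z$; $(x\prec y+x\succ y)\succ z=x\succ(y\succ z)-y\succ(x\succ z)$; $(x\succ y)\prec z=-(y\prec x)\prec z$; $x\prec(y\prec z+y\succ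 z)=(x\prec y)\prec z+y\succ(x\prec z)$; $x\prec(y\rhd z+y\lhd z)=(x\prec y)\lhd z+y\rhd(x\prec z)$; $x\succ(y\lhd z)=(x\succ y)\lhd z+y\lhd(x\succ z+x\prec z)$; $x\succ(y\rhd z)=(x\succ y+x\prec y)\rhd z+y\rhd(x\succ z)$; $(x\lhd y)\prec z=x\lhd(y\succ z+y\prec z)+y\rhd(x\prec z)$; $(x\rhd y+x\lhd y)\succ z=x\rhd(y\succ z)+y\rhd(x\succ z)$; $(x\rhd y-y\lhd x)\prec z=0$; $(x\succ y+y\prec x)\lhd z=0$; $(x\succ y+x\prec y+y\succ x+y\prec x)\rhd z=0$. *)

From mathcomp Require Import all_boot all_algebra.
Set Implicit Arguments. Unset Strict Implicit. Unset Printing Implicit Defensive.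
Import GRing.Theory.
Local Open Scope ring_scope.

Section Defs.
Variable F : fieldType.

Definition is_linear (U W : lmodType F) (f : U -> W) : Prop :=
  forall (a : F) (u v : U), f (a *: u + v) = a *: f u + f v.

Definition is_bilinear (U W : lmodType F) (op : U -> U -> W) : Prop :=
  (forall x, is_linear (op x)) /\ (forall y, is_linear (fun x => op x y)).

Variable A : lmodType F.

Definition is_dual_prePoisson (circ br : A -> A -> A) : Prop :=
  is_bilinear circ /\ is_bilinear br /\
  (forall x y z, circ x (circ y z) = circ (circ x y) z) /\
  (forall x y z, circ (circ x y) z = circ (circ y x) z) /\
  (forall x y z, br x (br y z) = br (br x y) z + br y (br x z)) /\
  (forall x y z, br x (circ y z) = circ (br x y) z + circ y (br x z)) /\
  (forall x y z, br (circ x y) z = circ x (br y z) + circ y (br x z)) /\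
  (forall x y z, circ (br x y) z = - circ (br y x) z).

Definition is_dpp_hom (B : lmodType F) (circB brB : B -> B -> B)
  (circ br : A -> A -> A) (f : B -> A) : Prop :=
  is_linear f /\
  (forall u v, f (circB u v) = circ (f u) (f v)) /\
  (forall u v, f (brB u v) = br (f u) (f v)).

Variable V : lmodType F.

Definition is_rep (circ br : A -> A -> A) (lc rc lb rb : A -> V -> V) : Prop :=
  (forall x, is_linear (lc x)) /\ (forall x, is_linear (rc x)) /\
  (forall x, is_linear (lb x)) /\ (forall x, is_linear (rb x)) /\
  (forall v, is_linear (fun x => lc x v)) /\ (forall v, is_linear (fun x => rc x v)) /\
  (forall v, is_linear (fun x => lb x v)) /\ (forall v, is_linear (fun x => rb x v)) /\
  (forall x y v, rc x (rc y v) = rc (circ y x) v) /\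
  (forall x y v, rc (circ y x) v = lc y (rc x v)) /\
  (forall x y v, lc y (rc x v) = rc x (lc y v)) /\
  (forall x y v, lc (circ x y) v = lc x (lc y v)) /\
  (forall x y v, lc x (lc y v) = lc y (lc x v)) /\
  (forall x y v, lb (br x y) v = lb x (lb y v) - lb y (lb x v)) /\
  (forall x y v, rb (br x y) v = rb y (rb x v) + lb x (rb y v)) /\
  (forall x y v, rb x (rb y v) = - rb x (lb y v)) /\
  (forall x y v, rb (circ x y) v = rc y (rb x v) + lc x (rb y v)) /\
  (forall x y v, lb x (rc y v) = rc y (lb x v) + rc (br x y) v) /\
  (forall x y v, lb x (lc y v) = lc (br x y) v + lc y (lb x v)) /\
  (forall x y v, rb x (rc y v) = rc (br y x) v + lc y (rb x v)) /\
  (forall x y v, lb (circ x y) v = lc x (lb y v) + lc y (lb x v)) /\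
  (forall x y v, rb x (lc y v - rc y v) = 0) /\
  (forall x y v, rc x (lb y v + rb y v) = 0) /\
  (forall x y v, lc (br x y + br y x) v = 0).

Definition is_O_operator (circ br : A -> A -> A) (lc rc lb rb : A -> V -> V)
  (T : V -> A) : Prop :=
  is_linear T /\
  (forall u v, circ (T u) (T v) = T (lc (T u) v + rc (T v) u)) /\
  (forall u v, br (T u) (T v) = T (lb (T u) v + rb (T v) u)).

End Defs.

Definition is_RB_operator (F : fieldType) (A : lmodType F)
  (circ br : A -> A -> A) (P : A -> A) : Prop :=
  is_linear P /\
  (forall x y, circ (P x) (P y) = P (circ (P x) y + circ x (P y))) /\
  (forall x y, br (P x) (P y) = P (br (P x) y + br x (P y))).

Definition is_pre_dual_prePoisson (F : fieldType) (B : lmodType F)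
  (r l s p : B -> B -> B) : Prop :=
  is_bilinear r /\ is_bilinear l /\ is_bilinear s /\ is_bilinear p /\
  (forall x y z, l x (l y z + r y z) = l (l x y) z) /\
  (forall x y z, l (l x y) z = l (r y x) z) /\
  (forall x y z, l (r y x) z = r y (l x z)) /\
  (forall x y z, r x (r y z) = r (l x y + r x y) z) /\
  (forall x y z, r (l x y + r x y) z = r (l y x + r y x) z) /\
  (forall x y z, s (p x y + s x y) z = s x (s y z) - s y (s x z)) /\
  (forall x y z, p (s x y) z = - p (p y x) z) /\
  (forall x y z, p x (p y z + s y z) = p (p x y) z + s y (p x z)) /\
  (forall x y z, p x (r y z + l y z) = l (p x y) z + r y (p x z)) /\
  (forall x y z, s x (l y z) = l (s x y) z + l y (s x z + p x z)) /\
  (forall x y z, s x (r y z) = r (s x y + p x y) z + r y (s x z)) /\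
  (forall x y z, p (l x y) z = l x (s y z + p y z) + r y (p x z)) /\
  (forall x y z, s (r x y + l x y) z = r x (s y z) + r y (s x z)) /\
  (forall x y z, p (r x y - l y x) z = 0) /\
  (forall x y z, l (s x y + p y x) z = 0) /\
  (forall x y z, r (s x y + p x y + s y x + p y x) z = 0).

From mathcomp Require Import all_boot all_algebra.
Local Open Scope ring_scope.
Import GRing.Theory.
Set Implicit Arguments. Unset Strict Implicit. Unset Printing Implicit Defensive.

(* Every axiom of a pre-dual pre-Poisson algebra on V, evaluated through the
   O-operator identities T (u \circ_V v) = T u \circ T v and
   T [u, v]_V = [T u, T v], becomes one of the representation identities.
   A Rota-Baxter operator is exactly an O-operator for the regular
   representation (L_\circ, R_\circ, ad, R_[,]) of A on itself, so (b) is the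
   special case V = A of (a). *)

Section LinearMaps.
Variables (F : fieldType) (U W : lmodType F) (f : U -> W).
Hypothesis f_lin : is_linear f.

Lemma is_linearD u v : f (u + v) = f u + f v.
Proof. by have := f_lin 1 u v; rewrite !scale1r. Qed.

Lemma is_linear0 : f 0 = 0.
Proof. by apply: (@addrI _ (f 0)); rewrite -is_linearD !addr0. Qed.

Lemma is_linearB u v : f (u - v) = f u - f v.
Proof.
have fN w : f (- w) = - f w.
  by have := f_lin (-1) w 0; rewrite addr0 is_linear0 addr0 !scaleN1r.
by rewrite is_linearD fN.
Qed.

End LinearMaps.

Section OOperator.
Variables (F : fieldType) (A V : lmodType F) (circ br : A -> A -> A).
Variables (lc rc lb rb : A -> V -> V) (T : V -> A).
Hypotheses (rep : is_rep circ br lc rc lb rb)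
  (O_T : is_O_operator circ br lc rc lb rb T).

Let rhdV u v := lc (T u) v.
Let lhdV u v := rc (T v) u.
Let succV u v := lb (T u) v.
Let precV u v := rb (T v) u.

Lemma O_operator_bilinear :
  [/\ is_bilinear rhdV, is_bilinear lhdV, is_bilinear succV & is_bilinear precV].
Proof.
case: rep => lc_linr [rc_linr [lb_linr [rb_linr [lc_linl [rc_linl [lb_linl [rb_linl _]]]]]]].
have T_lin := O_T.1.
split; split=> x; rewrite /rhdV /lhdV /succV /precV //.
all: by move=> a u v; rewrite T_lin (lc_linl, rc_linl, lb_linl, rb_linl).
Qed.

Lemma O_operator_pre_dual_prePoisson :
  is_pre_dual_prePoisson rhdV lhdV succV precV.
Proof.
have [rhd_bil lhd_bil succ_bil prec_bil] := O_operator_bilinear.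
case: rep => _ [_ [_ [_ [_ [_ [_ [_ [r1 [r2 [r3 [r4 [r5
  [r6 [r7 [r8 [r9 [r10 [r11 [r12 [r13 [r14 [r15 r16]]]]]]]]]]]]]]]]]]]]]].
case: O_T => T_lin [T_circ T_br].
have T_circC u v : T (rc (T v) u + lc (T u) v) = circ (T u) (T v).
  by rewrite addrC T_circ.
have T_brC u v : T (rb (T v) u + lb (T u) v) = br (T u) (T v).
  by rewrite addrC T_br.
rewrite /is_pre_dual_prePoisson /rhdV /lhdV /succV /precV.
do 4 (split; first by []).
split; first by move=> x y z; rewrite T_circC r1.
split; first by move=> x y z; rewrite r1 r2 r3.
split; first by move=> x y z; rewrite r3.
split; first by move=> x y z; rewrite T_circC r4.
split; first by move=> x y z; rewrite !T_circC !r4 r5.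
split; first by move=> x y z; rewrite T_brC r6.
split; first by move=> x y z; rewrite r8 opprK.
split; first by move=> x y z; rewrite T_brC r7.
split; first by move=> x y z; rewrite -T_circ r9.
split; first by move=> x y z; rewrite -T_br r10.
split; first by move=> x y z; rewrite -T_br r11.
split; first by move=> x y z; rewrite -T_br r12.
split; first by move=> x y z; rewrite -T_circ r13.
split; first by move=> x y z; rewrite r14.
split; first by move=> x y z; rewrite r15.
by move=> x y z; rewrite -addrA (is_linearD T_lin) -!T_br r16.
Qed.

Lemma O_operator_dpp_hom :
  is_dpp_hom (fun u v => rhdV u v + lhdV u v) (fun u v => succV u v + precV u v)
    circ br T.
Proof.
by case: O_T => T_lin [T_circ T_br]; split=> //; split=> u v; rewrite /= ?T_circ ?T_br.
Qed.

End OOperator.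

Section RegularRepresentation.
Variables (F : fieldType) (A : lmodType F) (circ br : A -> A -> A).
Hypothesis dpp : is_dual_prePoisson circ br.

Lemma br_brl x y z : br (br x y) z = br x (br y z) - br y (br x z).
Proof. by case: dpp => _ [_ [_ [_ [jacobi _]]]]; rewrite jacobi addrK. Qed.

Lemma br_symmetrized_br0 x y z : br (br x y + br y x) z = 0.
Proof.
case: dpp => _ [[_ br_linl] _].
by rewrite (is_linearD (br_linl z)) !br_brl addrA subrK subrr.
Qed.

Lemma circ_symmetrized_br0 x y z : circ (br x y + br y x) z = 0.
Proof.
case: dpp => [[_ circ_linl] [_ [_ [_ [_ [_ [_ br_circ_anti]]]]]]].
by rewrite (is_linearD (circ_linl z)) br_circ_anti addNr.
Qed.

Lemma regular_rep :
  is_rep circ br circ (fun x v => circ v x) br (fun x v => br v x).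
Proof.
case: dpp => [[circ_linr circ_linl] [[br_linr br_linl]
  [circA [circ_swap [jacobi [br_circr [br_circl _]]]]]]].
do 8 (split; first by []).
split; first by move=> x y v /=; rewrite circA.
split; first by move=> x y v /=; rewrite circA circ_swap -circA.
split; first by move=> x y v /=; rewrite circA.
split; first by move=> x y v /=; rewrite circA.
split; first by move=> x y v /=; rewrite !circA circ_swap.
split; first by move=> x y v /=; rewrite br_brl.
split; first by move=> x y v /=; rewrite jacobi.
split.
  move=> x y v /=; apply/eqP; rewrite -subr_eq0 opprK -(is_linearD (br_linl x)).
  by rewrite br_symmetrized_br0.
split; first by move=> x y v /=; rewrite br_circr.
split; first by move=> x y v /=; rewrite br_circr.
split; first by move=> x y v /=; rewrite br_circr addrC.
split; first by move=> x y v /=; rewrite br_circl addrC.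
split; first by move=> x y v /=; rewrite br_circl.
split.
  move=> x y v /=; rewrite (is_linearB (br_linl x)) !br_circl.
  by rewrite [circ v _ + _]addrC subrr.
by split=> x y v /=; rewrite circ_symmetrized_br0.
Qed.

Lemma RB_operator_O_operator P :
  is_RB_operator circ br P ->
  is_O_operator circ br circ (fun x v => circ v x) br (fun x v => br v x) P.
Proof. by []. Qed.

End RegularRepresentation.

Theorem proposition3p27 (F : fieldType) (charF0 : [pchar F] =i pred0)
  (A : lmodType F) (circ br : A -> A -> A) :
  is_dual_prePoisson circ br ->
  (forall (V : lmodType F) (lc rc lb rb : A -> V -> V) (T : V -> A),
     is_rep circ br lc rc lb rb ->
     is_O_operator circ br lc rc lb rb T ->
     let rhdV := fun u v => lc (T u) v in
     let lhdV := fun u v => rc (T v) u in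
     let succV := fun u v => lb (T u) v in
     let precV := fun u v => rb (T v) u in
     is_pre_dual_prePoisson rhdV lhdV succV precV /\
     is_dpp_hom (fun u v => rhdV u v + lhdV u v) (fun u v => succV u v + precV u v)
       circ br T) /\
  (forall P : A -> A,
     is_RB_operator circ br P ->
     let rhd := fun x y => circ (P x) y in
     let lhd := fun x y => circ x (P y) in
     let succ := fun x y => br (P x) y in
     let prec := fun x y => br x (P y) in
     is_pre_dual_prePoisson rhd lhd succ prec /\
     is_dpp_hom (fun x y => rhd x y + lhd x y) (fun x y => succ x y + prec x y)
       circ br P).
Proof.
move=> dpp; split=> [V lc rc lb rb T rep O_T | P RB_P].
  exact: conj (O_operator_pre_dual_prePoisson rep O_T) (O_operator_dpp_hom O_T).
have rep := regular_rep dpp; have O_P := RB_operator_O_operator RB_P.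
exact: conj (O_operator_pre_dual_prePoisson rep O_P) (O_operator_dpp_hom O_P).
Qed.
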